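(* Let $\omega\ge 2$ and let $\Gamma$ be a finite simple graph on $n$ vertices which is $k$-regular and $\omega$-clique regular. Put $m=\frac{nk}{\omega(\omega-1)}$. Then \[p(C_\omega(\Gamma);\lambda)=(\lambda+\omega)^{m-n}\,p\!\left(\Gamma;\lambda+\omega-\frac{k}{\omega-1}\right),\] where $p(H;\lambda)=\det(\lambda I-A_H)$ denotes the characteristic polynomial of the adjacency matrix $A_H$ of a graph $H$.
   Context: A graph is $\omega$-clique regular if it has a nonempty edge set and every edge is contained in exactly one clique of order $\omega$. The $\omega$-clique graph $C_\omega(\Gamma)$ has as vertices the cliques of order $\omega$ in $\Gamma$ (there are exactly $m=\frac{nk}{\omega(\omega-1)}$ of them), two distinct ones adjacent iff they have nonempty intersection. *)

From HB Require Import structures.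
From mathcomp Require Import all_boot all_order all_algebra fraction.
Set Implicit Arguments. Unset Strict Implicit. Unset Printing Implicit Defensive.
Import Order.TTheory GRing.Theory Num.Theory.
Local Open Scope ring_scope.

(* A finite simple graph: vertex type T : finType, adjacency e : rel T,
   assumed symmetric and irreflexive in the theorem. *)

Definition adjmx (V : finType) (e : rel V) : 'M[rat]_#|V| :=
  \matrix_(i, j) (e (enum_val i) (enum_val j))%:R.

Definition is_clique (T : finType) (e : rel T) (w : nat) (A : {set T}) : bool :=
  (#|A| == w)%N && [forall x in A, forall y in A, (x != y) ==> e x y].

Definition k_regular (T : finType) (e : rel T) (k : nat) : Prop :=
  forall x : T, #|[set y | e x y]| = k.

Definition clique_regular (T : finType) (e : rel T) (w : nat) : Prop :=
  (exists x y, e x y) /\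
  forall x y, e x y -> exists! A : {set T}, [&& is_clique e w A, x \in A & y \in A].

(* Vertices of the omega-clique graph: the cliques of order w. *)
Definition cliqueT (T : finType) (e : rel T) (w : nat) : finType :=
  {A : {set T} | is_clique e w A}.

(* Adjacency of the omega-clique graph: distinct cliques with nonempty intersection. *)
Definition clique_rel (T : finType) (e : rel T) (w : nat) : rel (cliqueT e w) :=
  fun A B => (A != B) && (val A :&: val B != set0).

Notation ratfun := {fraction {poly rat}}.
Definition tofracp (p : {poly rat}) : ratfun := FracField.tofrac p.
Arguments clique_rel {T} e w.
Arguments cliqueT {T} e w.
Arguments is_clique {T} e w A.

(** Let [N] be the vertex-clique incidence matrix of [Γ]. Every edge lies in
    exactly one ω-clique, every vertex in [k/(ω-1)] of them, and two distinct
    ω-cliques meet in at most one vertex; hence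
    [N Nᵀ = k/(ω-1) I + A(Γ)] and [Nᵀ N = ω I + A(C_ω(Γ))].
    The Weinstein–Aronszajn identity
    [λ^m det(λ I - N Nᵀ) = λ^n det(λ I - Nᵀ N)] at [λ = x + ω] then relates the
    two characteristic polynomials. *)
From mathcomp Require Import all_boot all_algebra fraction.
Import GRing.Theory Num.Theory.
Set Implicit Arguments. Unset Strict Implicit. Unset Printing Implicit Defensive.
Local Open Scope ring_scope.

Lemma det_scalar_sub_mulmxC (R : comNzRingType) n m
    (P : 'M[R]_(n, m)) (Q : 'M[R]_(m, n)) (a : R) :
  a ^+ m * \det (a%:M - P *m Q) = a ^+ n * \det (a%:M - Q *m P).
Proof.
pose B := block_mx (a%:M : 'M_n) P Q (1%:M : 'M_m).
have lowerB : block_mx 1%:M (- P) 0 a%:M *m B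
              = block_mx (a%:M - P *m Q) 0 (a *: Q) (a%:M : 'M_m).
  rewrite mulmx_block !mul1mx !mul0mx !add0r mulmx1 mulNmx subrr.
  by rewrite !mul_scalar_mx scalemx1.
have upperB : block_mx 1%:M 0 (- Q) a%:M *m B
              = block_mx (a%:M : 'M_n) P 0 (a%:M - Q *m P).
  rewrite mulmx_block !mul1mx !mul0mx !addr0 mulmx1 -scalar_mxC mulNmx addNr.
  by rewrite addrC mulNmx.
have := congr1 determinant lowerB; have := congr1 determinant upperB.
rewrite !det_mulmx det_lblock !det_ublock det_lblock !det_scalar expr1n !mul1r.
by move=> -> ->; rewrite mulrC.
Qed.

Lemma det_comp_char_poly (R : comNzRingType) n (A : 'M[R]_n) (c : R) p :
  \det (p%:M - map_mx polyC (c%:M + A)) = char_poly A \Po (p - c%:P).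
Proof.
rewrite /char_poly -det_map_mx /char_poly_mx map_mxB /= map_scalar_mx /=.
rewrite comp_polyX map_mxD map_scalar_mx /= opprD addrA -raddfB.
by congr (\det (_ - _)); apply/matrixP => i j; rewrite !mxE /= comp_polyC.
Qed.

Lemma eq_expfzB_mul (F : fieldType) (u a b : F) (m n : nat) :
  u != 0 -> u ^+ m * a = u ^+ n * b -> b = u ^ (m%:Z - n%:Z) * a.
Proof.
move=> u0 eq_ab; rewrite expfzDr // -exprnN mulrAC.
by rewrite [u ^ m%:Z]/= eq_ab mulrC mulKf // expf_neq0.
Qed.

Lemma sum_indicator_card (I : finType) (P : pred I) :
  (\sum_i (P i : nat))%N = #|[set i | P i]|.
Proof.
by rewrite -sum1dep_card [RHS]big_mkcond; apply: eq_bigr => i _; case: (P i).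
Qed.

Definition incmx (R : pzSemiRingType) (U V : finType) (r : U -> V -> bool) :
    'M[R]_(#|U|, #|V|) :=
  \matrix_(i, j) (r (enum_val i) (enum_val j))%:R.

Lemma tr_incmx (R : pzSemiRingType) (U V : finType) (r : U -> V -> bool) :
  (incmx R r)^T = incmx R (fun v u => r u v).
Proof. by apply/matrixP => i j; rewrite !mxE. Qed.

Lemma incmx_mul_tr (R : pzSemiRingType) (U V : finType) (r : U -> V -> bool)
    i j :
  (incmx R r *m (incmx R r)^T) i j
  = #|[set v | r (enum_val i) v & r (enum_val j) v]|%:R.
Proof.
rewrite mxE -sum1dep_card natr_sum [RHS]big_mkcond /=.
under eq_bigr do rewrite !mxE.
rewrite -(big_enum_val
  (fun v => (r (enum_val i) v)%:R * (r (enum_val j) v)%:R)).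
by apply: eq_bigr => v _; rewrite -natrM mulnb; case: andb.
Qed.

Section CliqueCounting.

Variables (T : finType) (e : rel T) (w : nat).
Implicit Types (C D : cliqueT e w) (x y : T).

Lemma clique_adj C x y : x \in val C -> y \in val C -> x != y -> e x y.
Proof.
case/andP: (valP C) => _ /forall_inP adjC xC yC nxy.
by move/forall_inP: (adjC x xC) => /(_ y yC) /implyP; apply.
Qed.

Lemma card_clique C : #|val C| = w.
Proof. by case/andP: (valP C) => /eqP. Qed.

Hypothesis cliqueR : clique_regular e w.

Lemma clique_eq C D x y :
  x \in val C -> y \in val C -> x \in val D -> y \in val D -> x != y -> C = D.
Proof.
move=> xC yC xD yD nxy; case: cliqueR => _ /(_ x y (clique_adj xC yC nxy)).
case=> A [_ uniqA]; apply: val_inj.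
have inA (E : cliqueT e w) : x \in val E -> y \in val E -> val E = A.
  by move=> xE yE; symmetry; apply: uniqA; rewrite (valP E) xE yE.
by rewrite (inA C) // (inA D).
Qed.

Lemma card_cliques_through2 x y : x != y ->
  #|[set C : cliqueT e w | x \in val C & y \in val C]| = e x y.
Proof.
move=> nxy; case exy: (e x y).
  case: cliqueR => _ /(_ x y exy) [A [/and3P[cA xA yA] _]].
  pose CA : cliqueT e w := exist _ A cA.
  rewrite [RHS]/= -(cards1 CA); apply: eq_card => C; rewrite !inE.
  apply/andP/eqP => [[xC yC]|->]; last by rewrite xA yA.
  exact: (clique_eq (D := CA) xC yC xA yA nxy).
apply/eqP; rewrite cards_eq0; apply/eqP/setP => C; rewrite !inE.
by apply/andP => -[xC yC]; rewrite (clique_adj xC yC nxy) in exy.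
Qed.

Lemma card_clique_setD1 C x : x \in val C -> #|val C :\ x| = w.-1.
Proof.
by move=> xC; have := congr1 predn (card_clique C); rewrite (cardsD1 x) xC.
Qed.

Lemma card_cliques_through k x : irreflexive e -> k_regular e k ->
  (#|[set C : cliqueT e w | x \in val C]| * w.-1)%N = k.
Proof.
move=> irr regk; rewrite -sum_nat_const.
transitivity
  (\sum_(C : cliqueT e w) \sum_(y : T)
     ((x \in val C) && (y \in val C :\ x) : nat))%N.
  rewrite big_mkcond; apply: eq_bigr => C _; rewrite inE.
  case: ifP => xC; last by rewrite big1.
  rewrite sum_indicator_card -(card_clique_setD1 xC).
  by apply: eq_card => y; rewrite inE.
rewrite exchange_big -(regk x) -sum_indicator_card; apply: eq_bigr => y _.
rewrite sum_indicator_card; case: (eqVneq y x) => [->|nyx].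
  rewrite irr; apply/eqP; rewrite cards_eq0; apply/eqP/setP => C.
  by rewrite !inE eqxx andbF.
have nxy : x != y by rewrite eq_sym.
by rewrite -(card_cliques_through2 nxy); apply: eq_card => C; rewrite !inE nyx.
Qed.

Lemma card_clique_meet C D : C != D -> #|val C :&: val D| = clique_rel e w C D.
Proof.
move=> nCD; rewrite /clique_rel nCD -card_gt0.
suff : (#|val C :&: val D| <= 1)%N by case: #|_| => [|[|]].
apply/card_le1_eqP => x y; rewrite !inE => /andP[xC xD] /andP[yC yD].
by apply/contraTeq: nCD => nyx; rewrite negbK (clique_eq yC xC yD xD nyx).
Qed.

Definition clique_incmx := incmx rat (fun x (C : cliqueT e w) => x \in val C).

Lemma clique_incmx_mul_tr k : (1 < w)%N -> irreflexive e -> k_regular e k ->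
  clique_incmx *m clique_incmx^T = (k%:R / (w.-1)%:R)%:M + adjmx e.
Proof.
move=> w_gt1 irr regk; apply/matrixP => i j; rewrite incmx_mul_tr !mxE.
case: (eqVneq i j) => [<-|nij].
  have w1_neq0 : (w.-1)%:R != 0 :> rat by rewrite pnatr_eq0 -lt0n ltn_predRL.
  under eq_finset do rewrite andbb.
  rewrite irr addr0 -(card_cliques_through (enum_val i) irr regk).
  by rewrite natrM mulfK.
have nxy : enum_val i != enum_val j by apply: contra_neq nij => /enum_val_inj.
by rewrite mulr0n add0r card_cliques_through2.
Qed.

Lemma clique_incmx_tr_mul :
  clique_incmx^T *m clique_incmx = (w%:R)%:M + adjmx (clique_rel e w).
Proof.
apply/matrixP => C D.
rewrite -{2}[clique_incmx]trmxK tr_incmx incmx_mul_tr !mxE.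
case: (eqVneq C D) => [<-|nCD].
  under eq_finset do rewrite andbb.
  by rewrite /clique_rel eqxx addr0 cardsE card_clique.
have nCD' : enum_val C != enum_val D by apply: contra_neq nCD => /enum_val_inj.
rewrite mulr0n add0r -(card_clique_meet nCD').
by congr (_%:R); apply: eq_card => x; rewrite !inE.
Qed.

End CliqueCounting.

Theorem theorem8 (w : nat) (T : finType) (e : rel T) (k : nat) :
  (2 <= w)%N -> symmetric e -> irreflexive e ->
  k_regular e k -> clique_regular e w ->
  tofracp (char_poly (adjmx (clique_rel e w)))
  = tofracp ('X + (w%:R)%:P) ^ (#|cliqueT e w|%:Z - #|T|%:Z)
    * tofracp ((char_poly (adjmx e)) \Po ('X + (w%:R - k%:R / (w.-1)%:R : rat)%:P)).
Proof.
(* [symmetric e] is implied: every edge lies in a clique. *)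
move=> w_gt1 _ irr regk cliqueR.
have := det_scalar_sub_mulmxC (map_mx polyC (clique_incmx e w))
  (map_mx polyC (clique_incmx e w)^T) ('X + (w%:R)%:P).
rewrite -!map_mxM (clique_incmx_mul_tr cliqueR w_gt1 irr regk).
rewrite (clique_incmx_tr_mul cliqueR) !det_comp_char_poly addrK comp_polyXr.
rewrite -addrA -polyCB => /(congr1 tofracp).
rewrite /tofracp !rmorphM !rmorphXn /=; apply: eq_expfzB_mul.
by rewrite tofrac_eq0 monic_neq0 // monicXaddC.
Qed.
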